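(* Let $n,m\ge 1$, $I=\{1,\dots,m\}$, and let $f(x)=x^TAx+a^Tx+\alpha$ and $g_i(x)=x^TB_ix+b_i^Tx+\beta_i$ ($i\in I$) be functions on $\mathbb{R}^n$, where $A$ is a real symmetric $n\times n$ matrix, each $B_i$ is a real symmetric positive semidefinite $n\times n$ matrix, $a,b_i\in\mathbb{R}^n$ and $\alpha,\beta_i\in\mathbb{R}$. Suppose there exist $i_0\in I$ and $\lambda\in\mathbb{R}$ such that $B_{i_0}\succ 0$ and (H1) $A+\lambda B_{i_0}\succeq 0$; (H2) there exists a nonzero $v\in\mathbb{R}^n$ with $(A+\lambda B_{i_0})v=0$, $(a+\lambda b_{i_0})^Tv\le 0$, and $B_iv=0$, $b_i^Tv\le 0$ for all $i\in I_0:=I\setminus\{i_0\}$. Then the set $\mathrm{U}(f,g_1,\dots,g_m)$ is convex.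
   Context: $\mathrm{U}(f,g_1,\dots,g_m):=\{(f(x),g_1(x),\dots,g_m(x)) : x\in\mathbb{R}^n\}+\mathbb{R}^{m+1}_+\subset\mathbb{R}^{m+1}$. Condition (H2) is the paper's condition that the recession cone of the convex set $\{x: f(x)+\lambda g_{i_0}(x)\le 0,\ g_i(x)\le 0,\ i\in I_0\}$ is different from $\{0\}$; when this set is nonempty, its recession cone equals $\{v: (A+\lambda B_{i_0})v=0,\ (a+\lambda b_{i_0})^Tv\le0,\ B_iv=0,\ b_i^Tv\le 0,\ i\in I_0\}$. $M\succeq 0$ (resp. $M\succ 0$) means $M$ is positive semidefinite (resp. positive definite). *)

From HB Require Import structures.
From mathcomp Require Import all_boot all_order all_algebra.
From mathcomp Require Import reals.
Set Implicit Arguments. Unset Strict Implicit. Unset Printing Implicit Defensive.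
Import Order.TTheory GRing.Theory Num.Theory.
Local Open Scope ring_scope.

Definition quadf (R : realType) (n : nat) (M : 'M[R]_n) (c : 'cV[R]_n)
  (gamma : R) (x : 'cV[R]_n) : R :=
  (x^T *m M *m x) 0 0 + (c^T *m x) 0 0 + gamma.

Definition psd (R : realType) (n : nat) (M : 'M[R]_n) : Prop :=
  M^T = M /\ forall x : 'cV[R]_n, 0 <= (x^T *m M *m x) 0 0.
Definition pd (R : realType) (n : nat) (M : 'M[R]_n) : Prop :=
  M^T = M /\ forall x : 'cV[R]_n, x != 0 -> 0 < (x^T *m M *m x) 0 0.

(* the point (f(x), g_1(x), ..., g_m(x)) in R^{m+1}; coordinate 0 is f,
   coordinate lift ord0 i is g_i *)
Definition fg_point (R : realType) (n m : nat) (f : 'cV[R]_n -> R)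
  (g : 'I_m -> 'cV[R]_n -> R) (x : 'cV[R]_n) : 'rV[R]_(m.+1) :=
  \row_(j < m.+1) match unlift ord0 j with
                  | None => f x
                  | Some i => g i x
                  end.

(* U(f,g_1,...,g_m) = {(f(x),g_1(x),...,g_m(x)) : x in R^n} + R^{m+1}_+ *)
Definition Uset (R : realType) (n m : nat) (f : 'cV[R]_n -> R)
  (g : 'I_m -> 'cV[R]_n -> R) (y : 'rV[R]_(m.+1)) : Prop :=
  exists (x : 'cV[R]_n) (d : 'rV[R]_(m.+1)),
    (forall j, 0 <= d 0 j) /\ y = fg_point f g x + d.

Definition convex_set (R : realType) (k : nat) (S : 'rV[R]_k -> Prop) : Prop :=
  forall u v : 'rV[R]_k, S u -> S v -> forall t : R, 0 <= t -> t <= 1 ->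
    S (t *: u + (1 - t) *: v).

(* Every g_i is convex, and so is
   h := f + lambda g_i0, whose Hessian A + lambda B_i0 is positive semidefinite;
   hence at x := t x1 + (1 - t) x2 the g_i and h lie below the corresponding
   combinations G_i, H of their values at x1 and x2.  Along the direction v of
   (H2), h and the g_i with i <> i0 are affine and nonincreasing, while g_i0 is
   a strictly convex quadratic; so we can move from x along v to a point z with
   g_i0 z = G_i0.  There the g_i are still dominated, and
   f z = h z - lambda G_i0 <= H - lambda G_i0 = t f x1 + (1 - t) f x2. *)
From HB Require Import structures.
From mathcomp Require Import all_boot all_order all_algebra.
From mathcomp Require Import reals.
From mathcomp Require Import ring lra.
Import Order.TTheory GRing.Theory Num.Theory.
Local Open Scope ring_scope.

Set Implicit Arguments.
Unset Strict Implicit.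
Unset Printing Implicit Defensive.

Lemma quadratic_nonneg_root (F : rcfType) (p q k : F) :
  0 < q -> 0 <= k -> exists2 s, 0 <= s & s * p + s ^+ 2 * q = k.
Proof.
move=> q_gt0 k_ge0; pose D := p ^+ 2 + 4 * q * k.
have D_ge0 : 0 <= D by rewrite /D; nra.
pose r := Num.sqrt D.
have r_ge0 : 0 <= r := sqrtr_ge0 D.
have r2 : r ^+ 2 = D := sqr_sqrtr D_ge0.
have p_le_r : p <= r by case: (lerP p 0) => hp; [lra | rewrite /D in r2; nra].
exists ((r - p) / (2 * q)); first by apply: divr_ge0; lra.
have q_neq0 : q != 0 by rewrite gt_eqF.
transitivity ((r ^+ 2 - p ^+ 2) / (4 * q)); first by field.
by rewrite r2 /D; field.
Qed.

Section QuadraticFunctions.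
Variables (R : realType) (n : nat).
Implicit Types (M N : 'M[R]_n) (c d x y v w : 'cV[R]_n) (g h s t : R).

Definition bform M x y : R := (x^T *m M *m y) 0 0.
Definition lform c x : R := (c^T *m x) 0 0.

Lemma bformDl M x y w : bform M (x + y) w = bform M x w + bform M y w.
Proof. by rewrite /bform linearD /= !mulmxDl mxE. Qed.

Lemma bformDr M x y w : bform M w (x + y) = bform M w x + bform M w y.
Proof. by rewrite /bform !mulmxDr mxE. Qed.

Lemma bformZl M s x w : bform M (s *: x) w = s * bform M x w.
Proof. by rewrite /bform linearZ /= -!scalemxAl mxE. Qed.

Lemma bformZr M s x w : bform M w (s *: x) = s * bform M w x.
Proof. by rewrite /bform -!scalemxAr mxE. Qed.

Lemma bformC M x y : M^T = M -> bform M x y = bform M y x.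
Proof.
move=> sym_M; rewrite /bform.
have <- : (x^T *m M *m y)^T 0 0 = (x^T *m M *m y) 0 0 by rewrite mxE.
by rewrite !trmx_mul trmxK sym_M mulmxA.
Qed.

Lemma bform_kerr M x v : M *m v = 0 -> bform M x v = 0.
Proof. by move=> Mv0; rewrite /bform -mulmxA Mv0 mulmx0 mxE. Qed.

Lemma lformD c x y : lform c (x + y) = lform c x + lform c y.
Proof. by rewrite /lform mulmxDr mxE. Qed.

Lemma lformZ c s x : lform c (s *: x) = s * lform c x.
Proof. by rewrite /lform -scalemxAr mxE. Qed.

Lemma quadf_shift M c g x s w : M^T = M ->
  quadf M c g (x + s *: w) =
  quadf M c g x + s * (2 * bform M x w + lform c w) + s ^+ 2 * bform M w w.
Proof.
move=> sym_M; rewrite /quadf -/(bform M _ _) -/(bform M x x).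
rewrite -/(lform c _) -/(lform c x).
rewrite bformDl !bformDr !bformZl !bformZr lformD lformZ (bformC x w sym_M).
ring.
Qed.

Lemma quadf_shift_ker M c g x s v : M^T = M -> M *m v = 0 ->
  quadf M c g (x + s *: v) = quadf M c g x + s * lform c v.
Proof.
by move=> sym_M Mv0; rewrite quadf_shift // !bform_kerr //; ring.
Qed.

Lemma quadf_comb M N c d g h s x :
  quadf (M + s *: N) (c + s *: d) (g + s * h) x =
  quadf M c g x + s * quadf N d h x.
Proof.
rewrite /quadf mulmxDr mulmxDl -scalemxAr -scalemxAl.
have -> : (c + s *: d)^T = c^T + s *: d^T by rewrite linearD linearZ.
by rewrite mulmxDl -scalemxAl !mxE; ring.
Qed.

Lemma quadf_convex M c g x y t : psd M -> 0 <= t <= 1 ->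
  quadf M c g (t *: x + (1 - t) *: y) <=
  t * quadf M c g x + (1 - t) * quadf M c g y.
Proof.
move=> [sym_M psd_M] /andP[t_ge0 t_le1].
have -> : t *: x + (1 - t) *: y = y + t *: (x - y).
  by rewrite scalerBl scale1r scalerBr addrCA addrC.
have -> : quadf M c g x = quadf M c g (y + 1 *: (x - y)).
  by rewrite scale1r addrC subrK.
rewrite !quadf_shift // expr1n.
have := psd_M (x - y); rewrite -/(bform M _ _) => q_ge0.
suff : 0 <= t * (1 - t) * bform M (x - y) (x - y) by nra.
by rewrite !mulr_ge0 // subr_ge0.
Qed.

Lemma quadf_reach M c g x v (k : R) : pd M -> v != 0 -> quadf M c g x <= k ->
  exists2 s, 0 <= s & quadf M c g (x + s *: v) = k.
Proof.
move=> [sym_M pd_M] v_neq0 le_k.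
have gap_ge0 : 0 <= k - quadf M c g x by rewrite subr_ge0.
have [s s_ge0 hs] := quadratic_nonneg_root (2 * bform M x v + lform c v)
  (pd_M v v_neq0) gap_ge0.
by exists s => //; rewrite quadf_shift // -addrA hs addrC subrK.
Qed.

End QuadraticFunctions.

Lemma convex_Uset_of_dominated (R : realType) (n m : nat) (f : 'cV[R]_n -> R)
    (g : 'I_m -> 'cV[R]_n -> R) :
  (forall x y (t : R), 0 <= t <= 1 -> exists z,
     f z <= t * f x + (1 - t) * f y /\
     forall i, g i z <= t * g i x + (1 - t) * g i y) ->
  convex_set (Uset f g).
Proof.
move=> dominated u w [x [d [d_ge0 ->]]] [y [e [e_ge0 ->]]] t t_ge0 t_le1.
have t01 : 0 <= t <= 1 by rewrite t_ge0.
have [z [fz gz]] := dominated x y t t01.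
exists z, (t *: (fg_point f g x + d) + (1 - t) *: (fg_point f g y + e)
           - fg_point f g z).
split; last by rewrite [RHS]addrC subrK.
move=> j; rewrite !mxE; have := d_ge0 j; have := e_ge0 j.
by case: unliftP => [i ->|->] ej dj; [have := gz i|]; nra.
Qed.

Theorem theorem3p1 (R : realType) (n m : nat) (hn : (0 < n)%N) (hm : (0 < m)%N)
  (A : 'M[R]_n) (a : 'cV[R]_n) (alpha : R)
  (B : 'I_m -> 'M[R]_n) (b : 'I_m -> 'cV[R]_n) (beta : 'I_m -> R)
  (hA : A^T = A) (hB : forall i, psd (B i))
  (i0 : 'I_m) (lambda : R)
  (hBi0 : pd (B i0))
  (H1 : psd (A + lambda *: B i0))
  (H2 : exists v : 'cV[R]_n, v != 0 /\
        (A + lambda *: B i0) *m v = 0 /\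
        ((a + lambda *: b i0)^T *m v) 0 0 <= 0 /\
        (forall i, i != i0 -> B i *m v = 0 /\ ((b i)^T *m v) 0 0 <= 0)) :
  convex_set (Uset (quadf A a alpha) (fun i => quadf (B i) (b i) (beta i))).
Proof.
have [v [v_neq0 [Hv [Hav HBv]]]] := H2.
pose g i := quadf (B i) (b i) (beta i).
pose h :=
  quadf (A + lambda *: B i0) (a + lambda *: b i0) (alpha + lambda * beta i0).
have fg_h z : h z = quadf A a alpha z + lambda * g i0 z.
  by rewrite /h quadf_comb.
apply: convex_Uset_of_dominated => x1 x2 t t01.
pose x := t *: x1 + (1 - t) *: x2.
have gx i : g i x <= t * g i x1 + (1 - t) * g i x2 by exact: quadf_convex.
have hx : h x <= t * h x1 + (1 - t) * h x2 by exact: quadf_convex.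
clearbody x. (* otherwise [quadf_shift_ker] rewrites inside [x] itself *)
have [s s_ge0 gs] := quadf_reach hBi0 v_neq0 (gx i0).
pose z := x + s *: v.
have gz : g i0 z = t * g i0 x1 + (1 - t) * g i0 x2 := gs.
exists z; split.
  have hz : h z <= h x.
    rewrite /h quadf_shift_ker ?(proj1 H1) // gerDl; exact: mulr_ge0_le0.
  move: hx hz; rewrite !fg_h gz; lra.
move=> i; have [->|i_neq0] := eqVneq i i0; first by rewrite -/(g i0) gz.
have [Bv bv] := HBv i i_neq0.
have := gx i; rewrite /g /z quadf_shift_ker ?(proj1 (hB i)) //.
have := mulr_ge0_le0 s_ge0 bv; rewrite /lform; lra.
Qed.
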